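(* Let $G$ be a finite group and let $S$ be the set of universal vertices of the power graph $\mathcal{P}(G)$, and suppose $|S|>1$. Then $G$ has an $n$-power-free decomposition (for some $n\geqslant1$) if and only if $G$ is isomorphic to a generalized quaternion group.
   Context: The power graph $\mathcal{P}(G)$ of a finite group $G$ has vertex set $G$, two distinct elements being adjacent when one is a power of the other; a universal vertex is one adjacent to all other vertices. An $n$-power-free decomposition of $G$ ($n\geqslant1$) is a partition $G=C\uplus B_1\uplus\cdots\uplus B_n$ of $G$ into a cyclic $p$-subgroup $C$ of maximal order (for some prime $p$) and $n$ nonempty subsets $B_1,\ldots,B_n$ such that each $B_i$ is an independent set (pairwise nonadjacent vertices) of $\mathcal{P}(G)$ and $|B_i|>1$ for each $i$. The generalized quaternion group of order $2^n$ ($n\geqslant3$) is $Q_{2^n}=\langle x,y\mid x^{2^{n-1}}=1,\ y^2=x^{2^{n-2}},\ x^y=x^{-1}\rangle$. *)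

From mathcomp Require Import all_boot all_fingroup all_solvable.
Set Implicit Arguments.
Unset Strict Implicit.
Unset Printing Implicit Defensive.
Local Open Scope group_scope.

Definition pg_adj (gT : finGroupType) (x y : gT) : bool :=
  (x != y) && ((x \in <[y]>) || (y \in <[x]>)).

Definition pg_universal (gT : finGroupType) (G : {set gT}) : {set gT} :=
  [set x in G | [forall y in G, (y != x) ==> pg_adj x y]].

Definition pg_independent (gT : finGroupType) (B : {set gT}) : bool :=
  [forall x in B, forall y in B, ~~ pg_adj x y].

Definition power_free_decomposition (gT : finGroupType) (G : {group gT})
    (n : nat) (C : {group gT}) (B : 'I_n -> {set gT}) : Prop :=
  [/\ C \subset G /\ cyclic C,
      (exists2 p, prime p & p.-group C /\
        (forall D : {group gT}, D \subset G -> cyclic D -> p.-group D ->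
           #|D| <= #|C|)),
      (forall i, B i \subset G /\ 1 < #|B i| /\ pg_independent (B i)),
      (forall i, [disjoint C & B i]) /\ (forall i j, i != j -> [disjoint B i & B j]) &
      C :|: \bigcup_(i < n) B i = G].

Definition has_n_power_free_decomposition (gT : finGroupType) (G : {group gT})
    : Prop :=
  exists n, 1 <= n /\ exists C B, @power_free_decomposition gT G n C B.

From mathcomp Require Import all_boot all_fingroup all_solvable zify.
Set Implicit Arguments.
Unset Strict Implicit.
Unset Printing Implicit Defensive.
Local Open Scope group_scope.

(* A universal vertex u <> 1 of P(G) is comparable with every element: each
   y in G is a power of u or has u as a power. If G is not cyclic, some
   p-element lies outside <[u]> and has u as a power, which forces G to be a
   p-group whose elements of order p all lie in <[u]>; a non-cyclic p-group
   with a unique subgroup of order p is generalized quaternion.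
   A cyclic group has no power-free decomposition: a generator is adjacent to
   every other element, so it lies in C and C swallows the whole group.
   Conversely, in Q_(2^k) = <[x]> u D every t in D has order 4 with t^2 in
   <[x]>, so the only powers of t in D are t and t^-1; splitting D into B and
   B^-1 gives two independent sets, and <[x]> is a cyclic 2-subgroup of
   maximal order. *)

Section PowerGraph.

Variable gT : finGroupType.
Implicit Types (u x y : gT) (B : {set gT}) (G : {group gT}).

Lemma pg_adjV x y : pg_adj x^-1 y^-1 = pg_adj x y.
Proof. by rewrite /pg_adj !cycleV !groupV (inj_eq invg_inj). Qed.

Lemma pg_independentV B : pg_independent B -> pg_independent B^-1.
Proof.
move=> /forall_inP indB; apply/forall_inP => x Bx; apply/forall_inP => y By.
rewrite mem_invg in Bx; rewrite mem_invg in By.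
by rewrite -pg_adjV; have /forall_inP := indB _ Bx; apply.
Qed.

Lemma pg_universal_nontrivial G :
  1 < #|pg_universal G| -> exists2 u, u \in pg_universal G & u != 1.
Proof.
case/card_gt1P=> [x [y [Sx Sy nxy]]].
by have [x1 | ] := eqVneq x 1; [exists y; rewrite // -x1 eq_sym | exists x].
Qed.

Lemma pg_universal_comparable G u :
  u \in pg_universal G -> {in G, forall y, (y \in <[u]>) || (u \in <[y]>)}.
Proof.
case/setIdP=> _ /forall_inP univ_u y Gy; have [-> | nyu] := eqVneq y u.
  by rewrite cycle_id.
by have /andP[_] := implyP (univ_u y Gy) nyu; rewrite orbC.
Qed.

Lemma generator_notin_pg_independent g B :
  B \subset <[g]> -> 1 < #|B| -> pg_independent B -> g \notin B.
Proof.
move=> sBg ltB indB; apply/negP => Bg.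
have /subsetPn[z Bz /set1P nzg] : ~~ (B \subset [set g]).
  by apply: contraL ltB => /subset_leq_card; rewrite cards1 -leqNgt.
have /negP[] := forall_inP (forall_inP indB g Bg) z Bz.
by rewrite /pg_adj eq_sym (introN eqP nzg) (subsetP sBg z Bz) orbT.
Qed.

Lemma power_free_decomposition_noncyclic G n C (B : 'I_n -> {set gT}) :
  power_free_decomposition G C B -> 0 < n -> ~~ cyclic G.
Proof.
case=> [[sCG _] _ partB [tiCB _] defG] n_gt0; apply/cyclicP => -[g defGg].
have Cg : g \in C.
  have: g \in G by rewrite defGg cycle_id.
  rewrite -{1}defG inE => /orP[// | /bigcupP[i _ Big]].
  have [sBG [ltB indB]] := partB i; rewrite defGg in sBG.
  by rewrite (negPf (generator_notin_pg_independent sBG ltB indB)) in Big.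
have sGC : G \subset C by rewrite defGg cycle_subG.
have [sBG [ltB _]] := partB (Ordinal n_gt0).
have /set0Pn[z Bz] : B (Ordinal n_gt0) != set0 by rewrite -card_gt0 ltnW.
have Cz := subsetP sGC z (subsetP sBG z Bz).
by rewrite (disjointFr (tiCB _) Cz) in Bz.
Qed.

Lemma pg_independent_inv_free B :
    {in B &, forall a b, a \in <[b]> -> a = b \/ a = b^-1} ->
    [disjoint B & B^-1] -> pg_independent B.
Proof.
move=> cycB tiB; have BV'B c : c \in B -> c^-1 \notin B.
  by move=> Bc; rewrite -mem_invg (disjointFr tiB Bc).
apply/forall_inP => a Ba; apply/forall_inP => b Bb.
apply/negP => /andP[nab /orP[ab | ba]].
- case: (cycB a b Ba Bb ab) => eab; first by rewrite eab eqxx in nab.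
  by rewrite eab (negPf (BV'B b Bb)) in Ba.
- case: (cycB b a Bb Ba ba) => eba; first by rewrite eba eqxx in nab.
  by rewrite eba (negPf (BV'B a Ba)) in Bb.
Qed.

Lemma inv_transversal (D : {set gT}) :
    {in D, forall a, a^-1 \in D /\ a^-1 != a} ->
  exists B : {set gT}, [disjoint B & B^-1] /\ B :|: B^-1 = D.
Proof.
move=> invD; pose r (a : gT) := val (enum_rank a).
have r_inj : injective r by move=> a b /val_inj/enum_rank_inj.
exists [set a in D | r a < r a^-1]; split.
  rewrite -setI_eq0; apply/eqP/setP => a; rewrite !inE invgK.
  by case: (ltngtP (r a) (r a^-1)); rewrite ?andbF.
apply/setP => a; rewrite !inE invgK; apply/idP/idP => [/orP[] /andP[] // | Da].
  by move=> /invD[]; rewrite invgK.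
have [Da' na'a] := invD a Da; rewrite Da Da' /=.
by case: ltngtP => // /r_inj eaa; rewrite -eaa eqxx in na'a.
Qed.

End PowerGraph.

Section ComparableElement.

Variables (gT : finGroupType) (G : {group gT}) (u : gT).
Hypotheses (Gu : u \in G) (ntu : u != 1).
Let ntU : <[u]> != 1. Proof. by rewrite cycle_eq1. Qed.
Let ntG : G :!=: 1. Proof. by apply/trivgPn; exists u. Qed.
Hypothesis comparable_u : {in G, forall y, (y \in <[u]>) || (u \in <[y]>)}.

Lemma prime_dvd_comparable_order p : prime p -> p %| #|G| -> p %| #[u].
Proof.
move=> p_pr pG; have [y Gy oy] := Cauchy p_pr pG.
case/orP: (comparable_u Gy) => [uy | yu]; first by rewrite -oy order_dvdG.
have /(prime_nt_dvdP p_pr) -> // : #[u] %| p by rewrite -oy order_dvdG.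
by rewrite order_eq1.
Qed.

Lemma noncyclic_comparable_pgroup : ~~ cyclic G -> exists2 p, prime p & p.-group G.
Proof.
move=> ncycG; have /subsetPn[h Gh uh'] : ~~ (G \subset <[u]>).
  by apply: contra ncycG => /cyclicS; apply; apply: cycle_cyclic.
(* h is the product of its p-parts, so one of them avoids <[u]>. *)
have [p hp_u] : exists p : 'I_#[h].+1, h.`_p \notin <[u]>.
  apply/existsP; apply: contraR uh' => /existsPn hp_u.
  rewrite -(prod_constt h) big_mkord; apply: group_prod => p _.
  exact/negPn/hp_u.
have u_hp : u \in <[h.`_p]>.
  have Ghp : h.`_p \in G by apply: subsetP (cycle_constt p h); rewrite cycle_subG.
  by have := comparable_u Ghp; rewrite (negPf hp_u).
have pu : p.-elt u := mem_p_elt (p_elt_constt p h) u_hp.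
have [p_pr _ _] := pgroup_pdiv pu ntU.
exists p => //; apply/pgroupP => r r_pr rG; rewrite -pnatE //.
exact: pnat_dvd (prime_dvd_comparable_order r_pr rG) pu.
Qed.

Lemma comparable_Ohm1_sub (p : nat) : p.-group G -> 'Ohm_1(G) \subset <[u]>.
Proof.
move=> pG; rewrite (OhmE 1 pG) gen_subG; apply/subsetP => x.
rewrite !inE expn1 => /andP[Gx /eqP xp1].
case/orP: (comparable_u Gx) => // ux.
have ntx : x != 1 by apply: contraTneq ux => ->; rewrite cycle1 inE.
have [p_pr _ _] := pgroup_pdiv pG ntG.
have ox : #[x] = p by apply/prime_nt_dvdP; rewrite ?order_eq1 ?order_dvdn ?xp1.
have x_pr : prime #[x] by rewrite ox.
have [sXU | tiux] := prime_subgroupVti <[u]>%G x_pr; first by rewrite -cycle_subG.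
have : u \in <[u]> :&: <[x]> by rewrite inE cycle_id ux.
by rewrite tiux inE (negPf ntu).
Qed.

Lemma noncyclic_comparable_quaternion :
  ~~ cyclic G -> exists2 k, 2 < k & G \isog 'Q_(2 ^ k).
Proof.
move=> ncycG; have [p p_pr pG] := noncyclic_comparable_pgroup ncycG.
have sUG : <[u]> \subset G by rewrite cycle_subG.
have OhmG_eq : 'Ohm_1(G) = 'Ohm_1(<[u]>).
  apply/eqP; rewrite eqEsubset (OhmS 1 sUG) andbT -{1}(Ohm_id 1 G) OhmS //.
  exact: comparable_Ohm1_sub pG.
have /(prime_Ohm1P pG ntG) : #|'Ohm_1(G)| = p.
  by rewrite OhmG_eq (Ohm1_cyclic_pgroup_prime (cycle_cyclic u) (pgroupS sUG pG) ntU).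
by rewrite (negPf ncycG) => /andP[_ /eqP /quaternion_classP].
Qed.

End ComparableElement.

Lemma has_n_power_free_decomposition2 (gT : finGroupType) (G C : {group gT}) (p : nat)
    (B1 B2 : {set gT}) :
    C \subset G -> cyclic C -> prime p -> p.-group C ->
    (forall D : {group gT}, D \subset G -> cyclic D -> p.-group D -> #|D| <= #|C|) ->
    B1 \subset G /\ 1 < #|B1| /\ pg_independent B1 ->
    B2 \subset G /\ 1 < #|B2| /\ pg_independent B2 ->
    [disjoint C & B1] -> [disjoint C & B2] -> [disjoint B1 & B2] ->
    C :|: B1 :|: B2 = G ->
  has_n_power_free_decomposition G.
Proof.
move=> sCG cycC p_pr pC maxC B1G B2G tiCB1 tiCB2 tiB12 defG.
exists 2; split=> //; exists C, (tnth [tuple B1; B2]).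
split=> //; first by exists p.
- by case=> -[|[|//]].
- split; first by case=> -[|[|//]].
  by case=> -[|[|//]] ? [[|[|//]] ?]; rewrite // disjoint_sym.
by rewrite !big_ord_recl big_ord0 setU0 setUA.
Qed.

Section QuaternionDecomposition.

Variables (gT : finGroupType) (G : {group gT}) (k : nat) (x y : gT).
Hypotheses (k_gt2 : 2 < k) (isoG : G \isog 'Q_(2 ^ k)).
Hypothesis genG : extremal_generators G 2 k (x, y).

Let four_le_order_x : 4 <= #[x].
Proof. by have [_ _ -> _] := genG; rewrite -[4]/(2 ^ 2)%N leq_exp2l //; lia. Qed.

Lemma quaternion_order_outside : {in G :\: <[x]>, forall t, #[t] = 4}.
Proof. by have [[_ ? _] _ _ _ _] := quaternion_structure k_gt2 genG isoG. Qed.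

Lemma quaternion_sqr_outside t : t \in G :\: <[x]> -> t ^+ 2 \in <[x]>.
Proof.
move=> Dt; have [_ _ [_ _ inv2 _ _] _ _] := quaternion_structure k_gt2 genG isoG.
have Gt : t \in G by case/setDP: Dt.
have ot : #[t] = 4 by apply: quaternion_order_outside.
by rewrite (inv2 _ (groupX 2 Gt)) ?mem_cycle // orderXdiv ot.
Qed.

Lemma quaternion_cycle_outside a b :
  a \in G :\: <[x]> -> b \in G :\: <[x]> -> a \in <[b]> -> a = b \/ a = b^-1.
Proof.
move=> Da Db /cycleP[i def_a]; rewrite {a}def_a in Da *.
have ob := quaternion_order_outside Db.
rewrite -(expg_mod_order b i) ob in Da *; rewrite invg_expg ob.
have : i %% 4 < 4 by rewrite ltn_mod.
case: (i %% 4) Da => [|[|[|[|//]]]] Da _; [| by left | | by right].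
  by rewrite expg0 inE !group1 in Da.
by rewrite inE quaternion_sqr_outside in Da.
Qed.

Lemma quaternion_cyclic_max (D : {group gT}) : D \subset G -> cyclic D -> #|D| <= #[x].
Proof.
move=> sDG /cyclicP[d defD]; rewrite defD in sDG *.
have [Xd | X'd] := boolP (d \in <[x]>); first by rewrite subset_leq_card ?cycle_subG.
by rewrite -orderE quaternion_order_outside // inE X'd -cycle_subG.
Qed.

Lemma card_quaternion_outside : #|G :\: <[x]>| = #[x].
Proof.
have [oG Gx ox _] := genG.
rewrite cardsD (setIidPr _) ?cycle_subG // oG -orderE ox.
by rewrite -(prednK (ltnW (ltnW k_gt2))) expnS mul2n -addnn addnK.
Qed.

Lemma quaternion_has_power_free_decomposition : has_n_power_free_decomposition G.
Proof.
have [_ Gx ox _] := genG; set D := G :\: <[x]>.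
have sXG : <[x]> \subset G by rewrite cycle_subG.
have [B [tiBV defD]] : exists B : {set gT}, [disjoint B & B^-1] /\ B :|: B^-1 = D.
  apply: inv_transversal => a Da; split; first by rewrite /D !inE !groupV in Da *.
  apply/eqP => inv_a; suff : #[a] %| 2 by rewrite quaternion_order_outside.
  by rewrite order_dvdn expgS expg1 -{1}inv_a mulVg.
have sBD : B \subset D by rewrite -defD subsetUl.
have sBVD : B^-1 \subset D by rewrite -defD subsetUr.
have tiXD : [disjoint <[x]> & D] by rewrite disjoint_sym; have /subsetDP[] := subxx D.
have indB : pg_independent B.
  apply: pg_independent_inv_free tiBV => a b Ba Bb.
  by apply: quaternion_cycle_outside; apply: (subsetP sBD).
have cardB : 1 < #|B|.
  have eq_x : #[x] = #|B| + #|B^-1|.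
    by rewrite -card_quaternion_outside -/D -defD cardsU (disjoint_setI0 tiBV) cards0 subn0.
  by rewrite -ltn_double -(addnn #|B|) -{2}(card_invg B) -eq_x (leq_trans _ four_le_order_x).
apply: (has_n_power_free_decomposition2 (C := <[x]>%G) (p := 2)) => //.
- exact: cycle_cyclic.
- by rewrite /pgroup -orderE ox pnatX pnat_id.
- by move=> E sEG cycE _; apply: quaternion_cyclic_max.
- by split; first exact: subset_trans sBD (subsetDl _ _).
- split; first exact: subset_trans sBVD (subsetDl _ _).
  by rewrite card_invg; split; last exact: pg_independentV.
- exact: disjointWr sBD tiXD.
- exact: disjointWr sBVD tiXD.
- exact: tiBV.
by rewrite -setUA defD /D setDE setUIr setUCr setIT (setUidPr sXG).
Qed.

End QuaternionDecomposition.

Theorem corollary3p7 (gT : finGroupType) (G : {group gT}) :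
  1 < #|pg_universal G| ->
  (has_n_power_free_decomposition G <->
   exists2 k, 3 <= k & G \isog 'Q_(2 ^ k)).
Proof.
move=> /pg_universal_nontrivial[u Su ntu]; have /setIdP[Gu _] := Su.
split=> [[n [n_gt0 [C [B decG]]]] | [k k_gt2 isoG]].
  apply: (noncyclic_comparable_quaternion Gu ntu (pg_universal_comparable Su)).
  exact: power_free_decomposition_noncyclic decG n_gt0.
have [[x y] genG _] := generators_quaternion k_gt2 isoG.
exact: quaternion_has_power_free_decomposition genG.
Qed.
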